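(* Let $g\ge1$, $n=g+1$, $B\in\mathbb Z^{g\times n}$ with $B_{i,1}=1$, $B_{i,i+1}=-1$ and other entries $0$, and $Q=BB^T$. Let $k\in\{1,\dots,g\}$ and $\mathbf a\in[\mathbf k]$. Then the polytope $B^T(D_{\mathbf a,Q})$ (the convex hull of $\{B^T\mathbf c:\mathbf c\in\mathcal D_{\mathbf a,Q}\}$) is combinatorially equivalent to the hypersimplex $\Delta_{k,n}$.
   Context: $V_Q=\{\mathbf a\in\mathbb R^g:\ \mathbf a^TQ\mathbf a\le(\mathbf a-\mathbf c)^TQ(\mathbf a-\mathbf c)\ \forall\mathbf c\in\mathbb Z^g\}$; for $k=1,\dots,g$, $[\mathbf k]\subset\mathbb R^g$ is the set of vectors with entries in $\{-\tfrac{k}{g+1},\tfrac{g+1-k}{g+1}\}$ having either $k$ or $k-1$ entries equal to $\tfrac{g+1-k}{g+1}$; these are vertices of $V_Q$. For a vertex $\mathbf a$, $\mathcal D_{\mathbf a,Q}=\{\mathbf c\in\mathbb Z^g:\ \mathbf a^TQ\mathbf a=(\mathbf a-\mathbf c)^TQ(\mathbf a-\mathbf c)\}$ and $D_{\mathbf a,Q}$ is its convex hull. The hypersimplex is $\Delta_{k,n}=\mathrm{Conv}\{\sum_{i\in I}\mathbf e_i: I\subset[n],|I|=k\}\subset\mathbb R^n$. *)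

From HB Require Import structures.
From mathcomp Require Import all_boot all_order all_algebra.
From mathcomp Require Import boolp classical_sets reals.
Set Implicit Arguments. Unset Strict Implicit. Unset Printing Implicit Defensive.
Import Order.TTheory GRing.Theory Num.Theory.
Local Open Scope ring_scope.
Local Open Scope classical_set_scope.

Section Defs.
Variable R : realType.

(* B in Z^{g x (g+1)} (entries cast to R): B_{i,1} = 1, B_{i,i+1} = -1
   (1-based); 0-based: column 0 is 1, column i+1 is -1. *)
Definition Bmat (g : nat) : 'M[R]_(g, g.+1) :=
  \matrix_(i < g, j < g.+1)
    (((nat_of_ord j == 0)%N)%:R - ((nat_of_ord j == i.+1)%N)%:R).

Definition Qmat (g : nat) : 'M[R]_g := Bmat g *m (Bmat g)^T.

Definition qform (g : nat) (Q : 'M[R]_g) (x : 'cV[R]_g) : R :=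
  ((x^T *m Q *m x) 0 0).

Definition intvec (g : nat) (c : 'cV[int]_g) : 'cV[R]_g :=
  map_mx (fun z : int => z%:~R) c.

Definition calD (g : nat) (a : 'cV[R]_g) (Q : 'M[R]_g) : set 'cV[int]_g :=
  [set c | qform Q a = qform Q (a - intvec c)].

Definition kclass (g k : nat) : set 'cV[R]_g :=
  [set a | (forall i : 'I_g,
              a i 0 = - (k%:R / g.+1%:R) \/ a i 0 = (g.+1 - k)%:R / g.+1%:R)
         /\ (#|[set i : 'I_g | a i 0 == (g.+1 - k)%:R / g.+1%:R]| = k
             \/ #|[set i : 'I_g | a i 0 == (g.+1 - k)%:R / g.+1%:R]| = k.-1)].

Definition conv (n : nat) (S : set 'cV[R]_n) : set 'cV[R]_n :=
  [set x | exists (s : seq 'cV[R]_n) (w : seq R),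
      [/\ size w = size s, (forall v, v \in s -> S v),
          (forall t, t \in w -> 0 <= t), \sum_(t <- w) t = 1 &
          x = \sum_(i < size s) w`_i *: s`_i]].

(* faces of P (including the empty face and P itself):
   F = P ∩ {x | w.x = c} for a valid inequality w.x <= c on P *)
Definition is_face (n : nat) (P F : set 'cV[R]_n) : Prop :=
  exists (w : 'cV[R]_n) (c : R),
    (forall x, P x -> (w^T *m x) 0 0 <= c) /\
    F = [set x | P x /\ (w^T *m x) 0 0 = c].

Definition comb_equiv (n m : nat) (P : set 'cV[R]_n) (P' : set 'cV[R]_m) : Prop :=
  exists f : set 'cV[R]_n -> set 'cV[R]_m,
    [/\ (forall F, is_face P F -> is_face P' (f F)),
        (forall G, is_face P' G -> exists2 F, is_face P F & f F = G) &
        (forall F1 F2, is_face P F1 -> is_face P F2 ->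
            (F1 `<=` F2 <-> f F1 `<=` f F2))].

Definition hypersimplex (k n : nat) : set 'cV[R]_n :=
  conv [set x | exists I : {set 'I_n}, #|I| = k /\
                  x = \col_(i < n) ((i \in I)%:R : R)].

Definition BT_D (g : nat) (a : 'cV[R]_g) : set 'cV[R]_g.+1 :=
  conv [set (Bmat g)^T *m intvec c | c in calD a (Qmat g)].

End Defs.

Arguments kclass R g k _ : clear implicits.
Arguments hypersimplex R k n _ : clear implicits.

(* Writing [B^T x = (sum_i x_i, -x_1, ..., -x_g)], the vector [B^T x] has
   coordinate sum zero and [x^T Q x = |B^T x|^2].  For [a] in [[k]] one finds
   [B^T a = kappa 1 - u] with [kappa = k/(g+1)] and [u] a 0/1 vector of weight
   [k].  As [B^T c] sums to zero, [c] lies in [D_{a,Q}] iff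
   [|B^T c + u|^2 = |u|^2 = k]; the integer vector [B^T c + u] also has
   coordinate sum [k], so [sum z_j (z_j - 1) = 0] forces it to be a 0/1 vector
   of weight [k].  Conversely [B^T] maps [Z^g] onto the integer vectors of sum
   zero, so every such 0/1 vector occurs.  Hence [B^T(D_{a,Q})] is the
   translate of [Delta_{k,n}] by [-u], and translations preserve face
   lattices. *)

From HB Require Import structures.
From mathcomp Require Import all_boot all_order all_algebra.
From mathcomp Require Import boolp classical_sets reals.
From mathcomp Require Import ring lra zify.
Set Implicit Arguments. Unset Strict Implicit. Unset Printing Implicit Defensive.
Import Order.TTheory GRing.Theory Num.Theory.
Local Open Scope ring_scope.
Local Open Scope classical_set_scope.

Section Translation.
Variables (R : realType) (n : nat).
Implicit Types (S P F : set 'cV[R]_n) (v : 'cV[R]_n).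

Definition translate S v := [set x + v | x in S].

Lemma translateP S v x : translate S v x <-> S (x - v).
Proof.
split; first by case=> y Sy <-; rewrite addrK.
by move=> Sx; exists (x - v); rewrite ?subrK.
Qed.

Lemma translateK S v : translate (translate S v) (- v) = S.
Proof. by apply/seteqP; split=> x; rewrite /= !translateP opprK addrK. Qed.

Lemma affine_comb_translate (s : seq 'cV[R]_n) (w : seq R) v :
  size w = size s -> \sum_(t <- w) t = 1 ->
  \sum_(i < size [seq y + v | y <- s]) w`_i *: [seq y + v | y <- s]`_i
  = \sum_(i < size s) w`_i *: s`_i + v.
Proof.
move=> sz_w w1; rewrite size_map.
under eq_bigr => i _ do rewrite (nth_map 0) // scalerDr.
rewrite big_split /= -scaler_suml; congr (_ + _).
by rewrite -[in RHS](scale1r v) -w1 -sz_w (big_nth 0) big_mkord.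
Qed.

Lemma conv_translate S v : conv (translate S v) = translate (conv S) v.
Proof.
apply/seteqP; split=> x.
  case=> s [w [sz_w sS w_ge0 w1 ->]]; apply/translateP.
  exists [seq y - v | y <- s], w; split=> //.
  - by rewrite size_map.
  - by move=> y /mapP [z /sS /translateP Sz ->].
  - by rewrite affine_comb_translate ?size_map.
case/translateP=> s [w [sz_w sS w_ge0 w1 x_eq]].
exists [seq y + v | y <- s], w; split=> //.
- by rewrite size_map.
- by move=> y /mapP [z /sS Sz ->]; apply/translateP; rewrite addrK.
- by rewrite affine_comb_translate // -x_eq subrK.
Qed.

Lemma is_face_translate P F v :
  is_face P F -> is_face (translate P v) (translate F v).
Proof.
case=> w [c [w_le ->]]; exists w, (c + (w^T *m v) 0 0).
have wB y : (w^T *m (y - v)) 0 0 = (w^T *m y) 0 0 - (w^T *m v) 0 0.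
  by rewrite mulmxBr !mxE.
split=> [x /translateP /w_le|]; first by rewrite wB; lra.
by apply/seteqP; split=> x; rewrite /= !translateP /= wB => -[Px wx];
  split=> //; lra.
Qed.

Lemma comb_equiv_translate P v : comb_equiv P (translate P v).
Proof.
exists (translate^~ v); split.
- by move=> F; apply: is_face_translate.
- move=> G PG; exists (translate G (- v)).
    by rewrite -(translateK P v); apply: is_face_translate.
  by rewrite -{2}(translateK G (- v)) opprK.
- move=> F1 F2 _ _; split=> [F12 x /translateP /F12 /translateP //|F12 x F1x].
  have /F12 /translateP : translate F1 v (x + v).
    by apply/translateP; rewrite addrK.
  by rewrite addrK.
Qed.

End Translation.

Section Indicators.
Variables (R : realType) (n : nat).

Definition indicator (I : {set 'I_n}) : 'cV[R]_n := \col_i (i \in I)%:R.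

Definition sqnorm (x : 'cV[R]_n) : R := \sum_j x j 0 ^+ 2.

Lemma sum_indicator I : \sum_j indicator I j 0 = #|I|%:R.
Proof.
rewrite -sumr_const [RHS]big_mkcond; apply: eq_bigr => j _.
by rewrite mxE; case: (j \in I).
Qed.

Lemma sqnorm_indicator I : sqnorm (indicator I) = #|I|%:R.
Proof.
rewrite -sum_indicator; apply: eq_bigr => j _.
by rewrite mxE; case: (j \in I); rewrite ?expr1n ?expr0n.
Qed.

Lemma indicator_int I j : indicator I j 0 \is a Num.int.
Proof. by rewrite mxE natr_int. Qed.

(* An integer [z] satisfies [z <= z^2], with equality only for [z = 0, 1]. *)
Lemma int_sqnorm_eq_sum (z : 'cV[R]_n) :
  (forall j, z j 0 \is a Num.int) -> sqnorm z = \sum_j z j 0 ->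
  z = indicator [set j | z j 0 == 1]%SET.
Proof.
move=> z_int z_sq; have sq_eq j : z j 0 ^+ 2 = z j 0.
  have /eqP : \sum_j (z j 0 ^+ 2 - z j 0) = 0 by rewrite sumrB -z_sq subrr.
  rewrite psumr_eq0 => [/allP/(_ j (mem_index_enum j))|i _]; last first.
    by rewrite subr_ge0 intr_ler_sqr.
  by rewrite subr_eq0 => /eqP.
apply/matrixP=> j l; rewrite (ord1 l) !mxE inE.
have : z j 0 * (z j 0 - 1) == 0 by rewrite mulrBr mulr1 -expr2 sq_eq subrr.
rewrite mulf_eq0 subr_eq0 => /orP[] /eqP->.
  by rewrite eq_sym oner_eq0 mulr0n.
by rewrite eqxx.
Qed.

Lemma sqnorm_sub_eq (p u d : 'cV[R]_n) (kappa : R) :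
  (forall j, p j 0 + u j 0 = kappa) -> \sum_j d j 0 = 0 ->
  sqnorm p = sqnorm (p - d) <-> sqnorm (d + u) = sqnorm u.
Proof.
move=> pu_const d_sum0.
have diffE : sqnorm (p - d) - sqnorm p =
    sqnorm (d + u) - sqnorm u - 2 * kappa * \sum_j d j 0.
  rewrite /sqnorm -!sumrB mulr_sumr -sumrB; apply: eq_bigr => j _.
  rewrite !mxE -(pu_const j); ring.
rewrite d_sum0 mulr0 subr0 in diffE.
split=> [pd_eq | du_eq].
  by apply/eqP; rewrite -subr_eq0 -diffE pd_eq subrr.
by apply/eqP; rewrite eq_sym -subr_eq0 diffE du_eq subrr.
Qed.

End Indicators.

Definition hypersimplex_vertices (R : realType) (k n : nat) : set 'cV[R]_n :=
  [set x | exists I : {set 'I_n}, #|I| = k /\ x = indicator R I].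
Arguments hypersimplex_vertices : clear implicits.

Lemma hypersimplexE (R : realType) k n :
  hypersimplex R k n = conv (hypersimplex_vertices R k n).
Proof. by []. Qed.

Section Bmat.
Variables (R : realType) (g : nat).
Local Notation BT := (Bmat R g)^T.

Lemma BT_row0 (x : 'cV[R]_g) : (BT *m x) ord0 0 = \sum_i x i 0.
Proof. by rewrite !mxE; apply: eq_bigr => i _; rewrite !mxE subr0 mul1r. Qed.

Lemma BT_lift (x : 'cV[R]_g) i : (BT *m x) (lift ord0 i) 0 = - x i 0.
Proof.
rewrite !mxE (bigD1 i) //= big1 => [|j ji]; rewrite !mxE /= eqSS.
  by rewrite eqxx sub0r mulN1r addr0.
by rewrite eq_sym -[(j == i :> nat)]/(j == i) (negbTE ji) subrr mul0r.
Qed.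

Lemma sum_BT (x : 'cV[R]_g) : \sum_j (BT *m x) j 0 = 0.
Proof.
rewrite big_ord_recl BT_row0 -big_split big1 // => i _ /=.
by rewrite BT_lift subrr.
Qed.

Lemma qform_Qmat (x : 'cV[R]_g) : qform (Qmat R g) x = sqnorm (BT *m x).
Proof.
rewrite /qform /Qmat !mulmxA -[x^T *m _]trmxK trmx_mul trmxK -mulmxA !mxE.
by apply: eq_bigr => j _; rewrite !mxE expr2.
Qed.

Lemma BT_intvec_int (c : 'cV[int]_g) j : (BT *m intvec R c) j 0 \is a Num.int.
Proof.
case: (unliftP ord0 j) => [i|] ->; rewrite ?BT_row0 ?BT_lift.
  by rewrite mxE rpredN intr_int.
by apply: rpred_sum => i _; rewrite mxE intr_int.
Qed.

Lemma BT_intvec_sum0 (z : 'cV[R]_g.+1) :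
  (forall j, z j 0 \is a Num.int) -> \sum_j z j 0 = 0 ->
  exists c : 'cV[int]_g, BT *m intvec R c = z.
Proof.
move=> z_int z_sum0; exists (\col_i Num.floor (- z (lift ord0 i) 0)).
have intvecE i : intvec R (\col_i Num.floor (- z (lift ord0 i) 0)) i 0
                 = - z (lift ord0 i) 0.
  by rewrite !mxE; apply/eqP; rewrite -intrEfloor rpredN.
apply/matrixP=> j l; rewrite (ord1 l).
case: (unliftP ord0 j) => [i|] ->; first by rewrite BT_lift intvecE opprK.
rewrite BT_row0 (eq_bigr _ (fun i _ => intvecE i)) sumrN.
by apply/eqP; rewrite eq_sym -addr_eq0; move: z_sum0; rewrite big_ord_recl => ->.
Qed.

End Bmat.

Section KClass.
Variables (R : realType) (g : nat).
Local Notation BT := (Bmat R g)^T.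

Definition set_cons (b : bool) (A : {set 'I_g}) : {set 'I_g.+1} :=
  [set j | if unlift ord0 j is Some i then i \in A else b]%SET.

Lemma indicator_set_cons0 b A : indicator R (set_cons b A) ord0 0 = b%:R.
Proof. by rewrite mxE inE unlift_none. Qed.

Lemma indicator_set_cons_lift b A i :
  indicator R (set_cons b A) (lift ord0 i) 0 = (i \in A)%:R.
Proof. by rewrite mxE inE liftK. Qed.

Lemma card_set_cons b A : #|set_cons b A| = (b + #|A|)%N.
Proof.
apply/eqP; rewrite -(eqr_nat R) -sum_indicator big_ord_recl natrD.
rewrite indicator_set_cons0 -sum_indicator.
apply/eqP; congr (_ + _); apply: eq_bigr => i _.
by rewrite indicator_set_cons_lift mxE.
Qed.

(* [U] is the set [A] of coordinates where [a] equals [1 - k/(g+1)], shifted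
   by one, with [0] adjoined exactly when [|A| = k-1]. *)
Lemma BT_kclass k (a : 'cV[R]_g) : (0 < k <= g.+1)%N -> kclass R g k a ->
  exists U : {set 'I_g.+1}, #|U| = k /\
    forall j, (BT *m a) j 0 + indicator R U j 0 = k%:R / g.+1%:R.
Proof.
move=> /andP[k_gt0 k_le] [a_val a_card]; set kappa := k%:R / g.+1%:R.
have highE : (g.+1 - k)%:R / g.+1%:R = 1 - kappa :> R.
  by rewrite natrB // /kappa mulrBl divff // pnatr_eq0.
set A := [set i | a i 0 == 1 - kappa]%SET.
have aE i : a i 0 = (i \in A)%:R - kappa.
  rewrite inE; case: (a_val i) => ->; rewrite ?highE ?eqxx //.
  rewrite (_ : (- kappa == 1 - kappa) = false) ?sub0r //.
  by apply/negbTE/eqP; lra.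
have cardA : #|A| = k \/ #|A| = k.-1.
  suff <- : #|[set i : 'I_g | a i 0 == (g.+1 - k)%:R / g.+1%:R]| = #|A| by [].
  by apply: eq_card => i; rewrite inE /in_set /in_mem /= asboolb highE.
set U := set_cons (#|A| != k) A.
have cardU : #|U| = k.
  by rewrite card_set_cons; case: cardA => ->; rewrite ?eqxx //; lia.
exists U; split=> // j; case: (unliftP ord0 j) => [i|] ->.
  by rewrite BT_lift indicator_set_cons_lift aE opprB subrK.
rewrite BT_row0 indicator_set_cons0 (eq_bigr _ (fun i _ => aE i)) sumrB.
have sumA : \sum_(i < g) ((i \in A)%:R : R) = #|A|%:R.
  by rewrite -sum_indicator; apply: eq_bigr => i _; rewrite mxE.
rewrite sumA sumr_const card_ord addrAC -natrD addnC -card_set_cons cardU.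
rewrite /kappa -mulr_natr.
by field; rewrite addrC natr1 pnatr_eq0.
Qed.

End KClass.

Section Vertices.
Variables (R : realType) (g : nat) (a : 'cV[R]_g) (U : {set 'I_g.+1}) (kappa : R).
Local Notation BT := (Bmat R g)^T.
Hypothesis BTa_offset : forall j, (BT *m a) j 0 + indicator R U j 0 = kappa.

Lemma calD_offsetE c :
  calD a (Qmat R g) c <-> sqnorm (BT *m intvec R c + indicator R U) = #|U|%:R.
Proof.
rewrite /calD /= !qform_Qmat mulmxBr -sqnorm_indicator.
exact: sqnorm_sub_eq BTa_offset (sum_BT _).
Qed.

Lemma hypersimplex_vertices_BT_calD :
  hypersimplex_vertices R #|U| g.+1 =
  translate [set BT *m intvec R c | c in calD a (Qmat R g)] (indicator R U).
Proof.
apply/seteqP; split=> x.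
  case=> I [cardI ->]; apply/translateP.
  have [c BTc] : exists c, BT *m intvec R c = indicator R I - indicator R U.
    apply: BT_intvec_sum0 => [j|]; first by rewrite !mxE rpredB ?natr_int.
    rewrite (eq_bigr (fun j => indicator R I j 0 - indicator R U j 0)).
      by rewrite sumrB !sum_indicator cardI subrr.
    by move=> j _; rewrite !mxE.
  by exists c => //; apply/calD_offsetE; rewrite BTc subrK sqnorm_indicator cardI.
case/translateP=> c /calD_offsetE Dc BTc; rewrite -(subrK (indicator R U) x) -BTc.
set z := BT *m intvec R c + indicator R U in Dc *.
have z_int j : z j 0 \is a Num.int.
  by rewrite mxE rpredD ?BT_intvec_int ?indicator_int.
have z_sum : \sum_j z j 0 = #|U|%:R.
  under eq_bigr => j _ do rewrite mxE.
  by rewrite big_split /= sum_BT add0r sum_indicator.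
have zE := int_sqnorm_eq_sum z_int (etrans Dc (esym z_sum)).
exists [set j | z j 0 == 1]%SET; split; last exact: zE.
by apply/eqP; rewrite -(eqr_nat R) -sum_indicator -zE z_sum.
Qed.

End Vertices.

Theorem theorem3p5 (R : realType) (g k : nat) (a : 'cV[R]_g) :
  (1 <= g)%N -> (1 <= k <= g)%N -> kclass R g k a ->
  comb_equiv (BT_D a) (hypersimplex R k g.+1).
Proof.
move=> _ /andP[k_gt0 k_le_g] a_class.
have k_range : (0 < k <= g.+1)%N by rewrite k_gt0 leqW.
have [U [cardU BTa]] := BT_kclass k_range a_class.
rewrite /BT_D hypersimplexE -cardU (hypersimplex_vertices_BT_calD BTa).
by rewrite conv_translate; apply: comb_equiv_translate.
Qed.
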